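(* For each nonnegative integer $n$, \[ \sum_{k=0}^{n} (-1)^k \overline{{n \brack k}}_{q,1} = \begin{cases} 0 &\text{if $n$ is odd,} \\ \sum_{j=-n/2}^{n/2} (-1)^j q^{j^2} &\text{if $n$ is even.} \end{cases} \]
   Context: An overpartition is a partition in which the last occurrence of each distinct part size may be overlined; its weight $|\lambda|$ is the sum of its parts. For integers $0\le k\le n$, $\overline{{n \brack k}}_{q,1}=\sum_{\lambda} q^{|\lambda|}$, the sum over all overpartitions $\lambda$ with largest part at most $n-k$ and at most $k$ parts (i.e. the generating function for overpartitions fitting inside an $(n-k)\times k$ rectangle). *)

From mathcomp Require Import all_boot all_order all_algebra.
Set Implicit Arguments. Unset Strict Implicit. Unset Printing Implicit Defensive.
Import Order.TTheory GRing.Theory Num.Theory.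
Local Open Scope ring_scope.

(* An overpartition with at most [a] parts and largest part at most [b] is
   encoded as a pair (t, f):
   - t : a.-tuple 'I_b.+1, the parts listed in nonincreasing order, padded
     with zeros to length exactly [a] (the zeros are not parts);
   - f : {ffun 'I_b.+1 -> bool}, the set of part sizes whose last occurrence
     is overlined; only positive sizes actually occurring in t may be flagged.
   This is a bijection with overpartitions fitting in a b x a rectangle. *)
Definition opart_in (a b : nat) (t : a.-tuple 'I_b.+1)
    (f : {ffun 'I_b.+1 -> bool}) : bool :=
  sorted (fun x y : nat => y <= x)%N (map (@nat_of_ord _) t) &&
  [forall i : 'I_b.+1, f i ==> ((0 < (i : nat))%N && (i \in t))].

Definition opart_weight (a b : nat) (t : a.-tuple 'I_b.+1) : nat :=
  (\sum_(i <- t) (i : nat))%N.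

Definition ovgauss (n k : nat) : {poly int} :=
  \sum_(p : k.-tuple 'I_(n - k).+1 * {ffun 'I_(n - k).+1 -> bool}
        | opart_in p.1 p.2) 'X^(opart_weight p.1).

From mathcomp Require Import all_boot all_order all_algebra.
From mathcomp Require Import zify ring.
Set Implicit Arguments. Unset Strict Implicit. Unset Printing Implicit Defensive.
Import Order.TTheory GRing.Theory Num.Theory.
Local Open Scope ring_scope.

(* An overpartition in an a x b box is a partition in that box together with a
   choice of overlining for each of its distinct part sizes.  Encode the
   partition by its boundary, a word of a north and b east steps: the area is
   the number of (north, later east) pairs and the distinct part sizes are the
   north steps immediately followed by an east step, each contributing 2.  The
   alternating sum becomes a signed sum over all words w of length n.  Cutting
   w after its first (east w) letters exhibits its Durfee square: w = u ++ v
   with north u = east v = j, the square contributes q^(j^2), and the sum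
   becomes sum_j q^(j^2) (A_j(n) + B_j(n)), where B_j counts the possible
   extra corner at the cut.  A_j(n) is the coefficient of x^n in F_j(x) F_j(-x)
   for the generating series F_j of boxes with j columns, and the recurrence
   (1 - q^(j+1) x) F_(j+1)(x) = x (1 + q^(j+1) x) F_j(x) gives
   F_j(x) F_j(-x) = (-x^2)^j / (1 - x^2); likewise B_j = A_j for j > 0. *)

Lemma partition_big_nat (V : nmodType) (I : Type) (f : I -> nat) (N : nat)
    (r : seq I) (P : pred I) (F : I -> V) :
  (forall i, P i -> (f i < N)%N) ->
  \sum_(i <- r | P i) F i = \sum_(k < N) \sum_(i <- r | P i && (f i == k)) F i.
Proof.
move=> lt_fN; transitivity (\sum_(i <- r | P i) \sum_(k < N | k == f i :> nat) F i).
  by apply: eq_bigr => i Pi; rewrite (big_ord1_eq _ (fun=> F i)) lt_fN.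
rewrite (exchange_big_dep xpredT) //; apply: eq_bigr => k _.
by apply: eq_bigl => i; rewrite eq_sym.
Qed.
Arguments partition_big_nat {V I} f N {r P F}.

Lemma sum_distn_center (V : nmodType) m (g : nat -> V) :
  \sum_(i < (m.*2).+1) g `|(i : nat)%:Z - m%:Z|%N =
  \sum_(j < m.+1) g j *+ (1 + (0 < j))%N.
Proof.
have -> : (m.*2).+1 = (m.+1 + m)%N by rewrite -addnn addSn.
under [RHS]eq_bigr do rewrite mulrnDr mulr1n.
rewrite big_split_ord big_split /= [X in _ = _ + X]big_ord_recl /= mulr0n add0r.
congr (_ + _).
  rewrite (reindex_inj rev_ord_inj); apply: eq_bigr => i _ /=; congr g.
  by rewrite subSS distnEr ?leq_subr // subKn // -ltnS.
by apply: eq_bigr => i _; congr g; rewrite distnEl ?addSnnS ?addKn // leq_addr.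
Qed.

Section TruncatedSeries.
Variable R : comRingType.
Implicit Types (p q u : {poly R}) (f g : nat -> R).

Lemma take_polyM K p q :
  take_poly K (p * q) = take_poly K (take_poly K p * take_poly K q).
Proof.
rewrite -{1}(poly_take_drop K p) -{1}(poly_take_drop K q).
set tp := take_poly K p; set tq := take_poly K q.
set dp := drop_poly K p; set dq := drop_poly K q.
have -> : (tp + dp * 'X^K) * (tq + dq * 'X^K) =
          tp * tq + (tp * dq + dp * (tq + dq * 'X^K)) * 'X^K by ring.
by rewrite take_polyD take_polyMXn_0 addr0.
Qed.

Lemma take_poly_mul_eq0 K u p :
  u`_0 = 1 -> take_poly K (u * p) = 0 -> take_poly K p = 0.
Proof.
move=> u0 up0; apply/polyP => i; rewrite coef_take_poly coef0.
case: ltnP => // lt_iK; elim/ltn_ind: i lt_iK => i IHi lt_iK.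
have := congr1 (fun r : {poly R} => r`_i) up0; rewrite coef_take_poly lt_iK coef0 coefM.
rewrite big_ord_recl u0 mul1r subn0 big1 ?addr0 // => k _.
by rewrite lift0 IHi ?mulr0 //; have := ltn_ord k; lia.
Qed.

Definition delay f c := if c is c'.+1 then f c' else 0.

Definition altconv f n := \sum_(c < n.+1) f c * ((-1) ^+ (n - c)%N * f (n - c)%N).

Lemma coefM_poly K f g i : (i < K)%N ->
  (\poly_(c < K) f c * \poly_(c < K) g c)`_i = \sum_(c < i.+1) f c * g (i - c)%N.
Proof.
move=> lt_iK; rewrite coefM; apply: eq_bigr => c _.
have [lt_cK lt_icK] : (c < K)%N /\ (i - c < K)%N by have := ltn_ord c; lia.
by rewrite !coef_poly lt_cK lt_icK.
Qed.

Lemma altconvE K f n : (n < K)%N ->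
  altconv f n = (\poly_(c < K) f c * \poly_(c < K) ((-1) ^+ c * f c))`_n.
Proof. by move=> lt_nK; rewrite coefM_poly. Qed.

Lemma altconv1 f n : (forall c, f c = 1) -> altconv f n = (~~ odd n)%:R.
Proof.
move=> f1; rewrite /altconv; under eq_bigr => c _ do rewrite !f1 mul1r mulr1.
elim: n => [|n IHn]; first by rewrite big_ord1.
rewrite big_ord_recl (eq_bigr (fun c : 'I_n.+1 => (-1) ^+ (n - c)%N)) => [|c _]; last first.
  by rewrite lift0 subSS.
by rewrite IHn subn0 -signr_odd /=; case: (odd n); rewrite /= ?addr0 ?addNr.
Qed.

Lemma take_poly_delay_rec K (a : R) f g :
  f 0 = 0 -> (forall c, f c.+1 = g c + a * (f c + delay g c)) ->
  take_poly K ((1 - a%:P * 'X) * \poly_(c < K) f c) =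
  take_poly K ('X * (1 + a%:P * 'X) * \poly_(c < K) g c).
Proof.
move=> f0 fS; apply/polyP => i; rewrite !coef_take_poly; case: ltnP => // lt_iK.
set F := \poly_(c < K) f c; set G := \poly_(c < K) g c.
have -> : (1 - a%:P * 'X) * F = F - a%:P * ('X * F) by ring.
have -> : 'X * (1 + a%:P * 'X) * G = 'X * G + a%:P * ('X * ('X * G)) by ring.
rewrite coefB coefD !coefCM !coefXM !coef_poly lt_iK.
case: i lt_iK => [|i] lt_iK /=; first by rewrite f0 mulr0 subr0 addr0.
rewrite ltnW // fS /delay.
by case: i lt_iK => [|i] lt_iK /=; rewrite ?(ltnW (ltnW lt_iK)); ring.
Qed.

(* With F, G the generating series of f, g, the recurrence reads
   (1 - a x) F(x) = x (1 + a x) G(x); multiplying it by its image under x -> -x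
   and cancelling 1 - a^2 x^2 gives F(x) F(-x) = - x^2 G(x) G(-x). *)
Lemma altconv_delay_rec (a : R) f g n :
  f 0 = 0 -> (forall c, f c.+1 = g c + a * (f c + delay g c)) ->
  altconv f n = if n is n'.+2 then - altconv g n' else 0.
Proof.
move=> f0 fS; case: n => [|[|n]].
- by rewrite /altconv big_ord1 f0 mul0r.
- by rewrite /altconv !big_ord_recr big_ord0 /= f0 !(mul0r, mulr0, add0r, addr0).
pose K := n.+3; pose sgn (h : nat -> R) c := (-1) ^+ c * h c.
pose F := \poly_(c < K) f c; pose Fs := \poly_(c < K) sgn f c.
pose G := \poly_(c < K) g c; pose Gs := \poly_(c < K) sgn g c.
have recF := take_poly_delay_rec K f0 fS.
have recFs : take_poly K ((1 - (- a)%:P * 'X) * Fs) =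
             take_poly K ('X * (1 + (- a)%:P * 'X) * - Gs).
  have -> : - Gs = \poly_(c < K) - sgn g c.
    by apply/polyP => i; rewrite coefN !coef_poly; case: ifP; rewrite ?oppr0.
  apply: take_poly_delay_rec => [|c]; first by rewrite /sgn f0 mulr0.
  by rewrite /sgn fS /delay; case: c => [|c] /=; rewrite !exprS; ring.
have : take_poly K ((1 - (a ^+ 2)%:P * 'X^2) * (F * Fs + 'X^2 * (G * Gs))) = 0.
  rewrite (_ : _ * _ = (1 - a%:P * 'X) * F * ((1 - (- a)%:P * 'X) * Fs) -
                       'X * (1 + a%:P * 'X) * G * ('X * (1 + (- a)%:P * 'X) * - Gs)).
    by rewrite raddfB /= [X in X - _]take_polyM [X in _ - X]take_polyM recF recFs subrr.
  by rewrite polyCN rmorphXn; ring.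
have u0 : (1 - (a ^+ 2)%:P * 'X^2)`_0 = 1.
  by rewrite coefB coef1 coefCM coefXn mulr0 subr0.
move=> /(take_poly_mul_eq0 u0) /(congr1 (fun r : {poly R} => r`_n.+2)).
rewrite coef_take_poly coef0 coefD coefXnM /= subn2 /= -!altconvE ?ltnSn //.
  by move/eqP; rewrite addr_eq0 => /eqP.
by rewrite /K ltnW.
Qed.

End TruncatedSeries.

Fixpoint box_parts (a b : nat) : seq (seq nat) :=
  if a is a'.+1 then [seq x :: s | x <- iota 0 b.+1, s <- box_parts a' x]
  else [:: [::]].

Definition ndistinct (s : seq nat) : nat := size (undup [seq x <- s | 0 < x]%N).

Definition ovwt (s : seq nat) : {poly int} := (2 ^ ndistinct s)%:R * 'X^(sumn s).

Definition ovbox (a b : nat) : {poly int} := \sum_(s <- box_parts a b) ovwt s.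

Lemma box_partsS a b :
  box_parts a.+1 b = [seq x :: s | x <- iota 0 b.+1, s <- box_parts a x].
Proof. by []. Qed.

Lemma mem_box_parts a b s :
  (s \in box_parts a b) = [&& sorted geq s, size s == a & all (leq^~ b) s].
Proof.
elim: a b s => [|a IHa] b s; first by case: s => // x t; rewrite andbCA.
rewrite box_partsS; apply/allpairsPdep/idP => [[x [t [+ + ->]]]|].
  rewrite mem_iota ltnS IHa /= => x_le_b /and3P[sorted_t /eqP <- t_le_x].
  rewrite (path_sortedE (rev_trans leq_trans)) t_le_x sorted_t x_le_b eqxx /=.
  by apply: sub_all t_le_x => y /leq_trans; apply.
case: s => [|x t] //=; rewrite (path_sortedE (rev_trans leq_trans)) eqSS.
move=> /and4P[/andP[t_le_x sorted_t] size_t x_le_b t_le_b].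
by exists x, t; rewrite -/(iota 0 b.+1) mem_iota ltnS x_le_b IHa sorted_t size_t.
Qed.

Lemma box_parts_uniq a b : uniq (box_parts a b).
Proof.
elim: a b => [|a IHa] b //; rewrite box_partsS.
apply: allpairs_uniq_dep => [||[x s] [y t] _ _ /= [-> ->]] //; exact: iota_uniq.
Qed.

Lemma box_parts_notin a x :
  perm_eq [seq s <- box_parts a x.+1 | x.+1 \notin s] (box_parts a x).
Proof.
apply: uniq_perm; rewrite ?filter_uniq ?box_parts_uniq // => s.
rewrite mem_filter !mem_box_parts andbC -!andbA; congr [&& _, _ & _].
apply/andP/allP => [[/allP le_x1 x1_notin_s] y y_in_s|le_x].
  by rewrite -ltnS ltn_neqAle le_x1 // andbT; apply: contraNneq x1_notin_s => <-.
split; first by apply/allP => y /le_x /leqW.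
by apply/negP => /le_x; rewrite ltnn.
Qed.

Lemma ovwt_cons x s :
  ovwt (x :: s) = 'X^x * ((1 + ((0 < x)%N && (x \notin s))%:R) * ovwt s).
Proof.
rewrite /ovwt /ndistinct /= exprD; case: ifP => [x_gt0|_] /=.
  rewrite mem_filter x_gt0 /=; case: (x \in s) => /=; last by rewrite expnS natrM; ring.
all: by rewrite addr0 mul1r mulrCA.
Qed.

Lemma ovboxS a b :
  ovbox a.+1 b = \sum_(x <- iota 0 b.+1) \sum_(s <- box_parts a x) ovwt (x :: s).
Proof. by rewrite /ovbox box_partsS big_allpairs_dep. Qed.

Lemma ovbox0l b : ovbox 0 b = 1.
Proof. by rewrite /ovbox big_seq1 /ovwt /ndistinct mul1r. Qed.

Lemma ovbox0r a : ovbox a 0 = 1.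
Proof.
elim: a => [|a IHa]; first exact: ovbox0l.
by rewrite ovboxS big_seq1 -[RHS]IHa; apply: eq_bigr => s _; rewrite ovwt_cons addr0 !mul1r.
Qed.

Lemma ovboxSS a b :
  ovbox a.+1 b.+1 = ovbox a.+1 b + 'X^(b.+1) * (ovbox a b.+1 + ovbox a b).
Proof.
rewrite !ovboxS -addn1 iotaD big_cat big_seq1 add0n; congr (_ + _).
rewrite [ovbox a b]/ovbox -(perm_big _ (box_parts_notin a b)) big_filter.
rewrite [X in _ + X]big_mkcond -big_split mulr_sumr; apply: eq_bigr => s _ /=.
by rewrite ovwt_cons; case: (_ \notin _) => /=; ring.
Qed.

Lemma card_flags b (Q : pred 'I_b.+1) :
  #|[pred f : {ffun 'I_b.+1 -> bool} | [forall i, f i ==> Q i]]| = (2 ^ #|Q|)%N.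
Proof.
rewrite -[2%N]card_bool -(card_pffun_on false Q); apply: eq_card => f; rewrite !inE.
apply/forallP/pffun_onP => [f_le_Q|[/subsetP f_le_Q _] i].
  by split=> [|//]; apply/subsetP => i; rewrite inE; move: (f_le_Q i); case: (f i).
by apply/implyP => fi; apply: f_le_Q; rewrite inE fi.
Qed.

Lemma card_distinct_parts a b (t : a.-tuple 'I_b.+1) :
  #|[pred i : 'I_b.+1 | (0 < i)%N && (i \in t)]| = ndistinct (map val t).
Proof.
rewrite cardE -(size_map val) /ndistinct; apply/perm_size/uniq_perm.
- by rewrite map_inj_uniq ?enum_uniq //; apply: val_inj.
- exact: undup_uniq.
move=> x; rewrite mem_undup mem_filter.
apply/mapP/andP => [[i + ->]|[x_gt0 /mapP[i i_in_t x_def]]].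
  by rewrite mem_enum inE (mem_map val_inj) => /andP.
by subst x; exists i; rewrite // mem_enum inE; apply/andP.
Qed.

Lemma sum_sorted_tuples a b (F : seq nat -> {poly int}) :
  \sum_(t : a.-tuple 'I_b.+1 | sorted geq (map val t)) F (map val t) =
  \sum_(s <- box_parts a b) F s.
Proof.
rewrite -(big_map (fun t : a.-tuple 'I_b.+1 => map val t) (sorted geq)) -big_filter.
apply/perm_big/uniq_perm; rewrite ?box_parts_uniq //.
  rewrite filter_uniq // map_inj_uniq ?index_enum_uniq // => t u /(inj_map val_inj).
  exact: val_inj.
move=> s; rewrite mem_filter mem_box_parts; congr (_ && _).
apply/mapP/andP => [[t _ ->]|[/eqP size_s s_le_b]].
  rewrite size_map size_tuple eqxx; split=> //.
  by apply/allP => _ /mapP[i _ ->]; rewrite -ltnS ltn_ord.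
have size_s' : size (map (@inord b) s) == a by rewrite size_map size_s.
exists (Tuple size_s'); rewrite ?mem_index_enum //= -map_comp map_id_in // => x.
by move/(allP s_le_b) => x_le_b /=; rewrite inordK.
Qed.

Lemma ovgaussE n k : ovgauss n k = ovbox k (n - k)%N.
Proof.
rewrite /ovbox -sum_sorted_tuples; set b := (n - k)%N.
transitivity (\sum_(t : k.-tuple 'I_b.+1)
                \sum_(f | opart_in t f) 'X^(opart_weight t) : {poly int}).
  by rewrite pair_big_dep.
rewrite [RHS]big_mkcond; apply: eq_bigr => t _; rewrite /opart_in.
case: ifP => _ /=; last by rewrite big_pred0.
pose Q := [pred i : 'I_b.+1 | (0 < i)%N && (i \in t)].
rewrite (eq_bigl [pred f : {ffun 'I_b.+1 -> bool} | [forall i, f i ==> Q i]]) //.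
rewrite sumr_const card_flags card_distinct_parts /ovwt mulr_natl.
by rewrite /opart_weight sumnE big_map.
Qed.

(* [true] is a north step and [false] an east step; [wt w] is
   2^(number of corners) * X^(area) for the partition with boundary [w]. *)
Fixpoint words (n : nat) : seq bitseq :=
  if n is n'.+1 then map (cons true) (words n') ++ map (cons false) (words n')
  else [:: [::]].

Definition north (w : bitseq) : nat := count id w.
Definition east (w : bitseq) : nat := count negb w.
Definition starts_east (w : bitseq) : bool := if w is x :: _ then ~~ x else false.
Definition ends_north (w : bitseq) : bool := last false w.

Fixpoint wt (w : bitseq) : {poly int} :=
  if w is x :: w' then
    (if x then 'X^(east w') * (1 + (starts_east w')%:R) else 1) * wt w'
  else 1.

Definition conj_word (w : bitseq) : bitseq := rev (map negb w).

Lemma size_words n w : w \in words n -> size w = n.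
Proof.
elim: n w => [|n IHn] w /=; first by rewrite inE => /eqP->.
by rewrite mem_cat => /orP[] /mapP[u /IHn <- ->].
Qed.

Lemma north_add_east w : (north w + east w)%N = size w.
Proof. exact: count_predC. Qed.

Lemma big_wordsS n (P : pred bitseq) (F : bitseq -> {poly int}) :
  \sum_(w <- words n.+1 | P w) F w =
  \sum_(w <- words n | P (true :: w)) F (true :: w) +
  \sum_(w <- words n | P (false :: w)) F (false :: w).
Proof. by rewrite big_cat !big_map. Qed.

Lemma big_words_cat c m (P : pred bitseq) (F : bitseq -> {poly int}) :
  \sum_(w <- words (c + m) | P w) F w =
  \sum_(u <- words c) \sum_(v <- words m | P (u ++ v)) F (u ++ v).
Proof.
elim: c P F => [|c IHc] P F; first by rewrite big_seq1.
by rewrite addSn !big_wordsS !(IHc (fun w => P (_ :: w))).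
Qed.

Lemma wt_cat u v : wt (u ++ v) =
  'X^(north u * east v) * ((1 + (ends_north u && starts_east v)%:R) * (wt u * wt v)).
Proof.
elim: u => [|x u IHu]; first by rewrite /= mul0n addr0 !mul1r.
rewrite cat_cons /= IHu /east count_cat -/(east u) -/(east v).
rewrite /north /= -/(north u) mulnDl !exprD.
by case: u {IHu} => [|y u]; case: x => /=; rewrite ?mul1n ?mul0n; ring.
Qed.

Lemma north_conj w : north (conj_word w) = east w.
Proof. by rewrite /north /conj_word count_rev count_map. Qed.

Lemma ends_north_conj w : ends_north (conj_word w) = starts_east w.
Proof. by case: w => [|x w] //; rewrite /conj_word /ends_north /= rev_cons last_rcons. Qed.

Lemma wt_conj w : wt (conj_word w) = wt w.
Proof.
elim: w => [|x w IHw] //; rewrite /conj_word /= rev_cons -cats1 wt_cat -/(conj_word w).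
rewrite IHw north_conj ends_north_conj.
by case: x; rewrite ?andbT ?andbF /= ?muln1 ?muln0; ring.
Qed.

Lemma big_words_conj n (P : pred bitseq) (F : bitseq -> {poly int}) :
  \sum_(w <- words n | P (conj_word w)) F (conj_word w) = \sum_(w <- words n | P w) F w.
Proof.
elim: n P F => [|n IHn] P F; first by rewrite !big_cons !big_nil.
transitivity (\sum_(v <- words 1) \sum_(u <- words n | P (conj_word v ++ conj_word u))
                 F (conj_word v ++ conj_word u)).
  rewrite -addn1 big_words_cat (exchange_big_dep xpredT) //; apply: eq_bigr => v _.
  by apply: eq_big => [u|u _]; rewrite /conj_word map_cat rev_cat.
rewrite -[n.+1]add1n big_words_cat !big_cons !big_nil !addr0 addrC.
by congr (_ + _); apply: (IHn (fun u => P (_ :: u)) (fun u => F (_ :: u))).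
Qed.

Definition boxgf (j c : nat) : {poly int} := \sum_(w <- words c | east w == j) wt w.

Definition boxgf_se (j c : nat) : {poly int} :=
  \sum_(w <- words c | east w == j) (starts_east w)%:R * wt w.

Lemma boxgfS j c : boxgf j c.+1 =
  (if j is j'.+1 then boxgf j' c else 0) + 'X^j * (boxgf j c + boxgf_se j c).
Proof.
rewrite /boxgf_se /boxgf big_wordsS addrC /=; congr (_ + _).
  case: j => [|j]; first by rewrite big_pred0.
  by apply: eq_big => w; rewrite ?add1n ?eqSS ?mul1r.
rewrite -big_split mulr_sumr /=.
by apply: eq_big => w; rewrite ?add0n // => /eqP->; rewrite -mulrA mulrDl mul1r.
Qed.

Lemma boxgf_seE j c : boxgf_se j c = if j is j'.+1 then delay (boxgf j') c else 0.
Proof.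
rewrite /boxgf_se; case: c => [|c].
  by rewrite big_cons big_nil mul0r add0r if_same; case: j.
rewrite big_wordsS big1 ?add0r => [|w _]; last by rewrite mul0r.
case: j => [|j] /=; first by rewrite big_pred0.
by apply: eq_big => w; rewrite ?add1n ?eqSS // !mul1r.
Qed.

Lemma boxgf_gt j c : (c < j)%N -> boxgf j c = 0.
Proof.
move=> lt_cj; rewrite /boxgf big_seq_cond big1 // => w /andP[/size_words size_w /eqP east_w].
by move: lt_cj; rewrite -east_w -size_w -north_add_east ltnNge leq_addl.
Qed.

Lemma boxgf0 c : boxgf 0 c = 1.
Proof.
elim: c => [|c IHc]; first by rewrite /boxgf big_cons big_nil /= addr0.
by rewrite boxgfS boxgf_seE IHc add0r addr0 mul1r.
Qed.

Lemma boxgf_id j : boxgf j j = 1.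
Proof.
elim: j => [|j IHj]; first exact: boxgf0.
rewrite boxgfS boxgf_seE IHj boxgf_gt //.
by case: j {IHj} => [|j]; rewrite /= ?boxgf_gt // addr0 mulr0 addr0.
Qed.

Lemma ovbox_boxgf a b : ovbox a b = boxgf b (a + b).
Proof.
elim: a b => [|a IHa] b; first by rewrite ovbox0l boxgf_id.
elim: b => [|b IHb]; first by rewrite ovbox0r addn0 boxgf0.
by rewrite ovboxSS IHb !IHa [in RHS]addnS boxgfS boxgf_seE !addSn !addnS.
Qed.

Lemma boxgf_conj j c : boxgf j c = \sum_(w <- words c | north w == j) wt w.
Proof.
by rewrite -big_words_conj; apply: eq_big => [w|w _]; rewrite ?north_conj ?wt_conj.
Qed.

Lemma boxgf_se_conj j c :
  boxgf_se j c = \sum_(w <- words c | north w == j) (ends_north w)%:R * wt w.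
Proof.
rewrite -big_words_conj; apply: eq_big => [w|w _]; first by rewrite north_conj.
by rewrite ends_north_conj wt_conj.
Qed.

Lemma east_cat_size u v : (east (u ++ v) == size u) = (east v == north u).
Proof.
by rewrite /east count_cat -/(east u) -/(east v) -north_add_east addnC eqn_add2r.
Qed.

Lemma north_cat_size u v : east v = north u -> north (u ++ v) = size v.
Proof.
move=> east_v; rewrite /north count_cat -/(north u) -/(north v) -east_v addnC.
exact: north_add_east.
Qed.

Lemma sum_durfee_pairs j c m :
  \sum_(u <- words c | north u == j) \sum_(v <- words m | east v == j)
     (1 + (ends_north u && starts_east v)%:R) * (wt u * wt v) =
  boxgf j c * boxgf j m + boxgf_se j c * boxgf_se j m.
Proof.
rewrite (boxgf_conj j c) (boxgf_se_conj j c) /boxgf /boxgf_se !big_distrlr -big_split.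
apply: eq_bigr => u _; rewrite -big_split; apply: eq_bigr => v _ /=.
by rewrite -mulnb natrM; ring.
Qed.

Lemma durfee_split n c : (c <= n)%N ->
  \sum_(w <- words n | east w == c) (-1) ^+ north w * wt w =
  (-1) ^+ (n - c)%N * \sum_(j < n.+1)
     'X^(j * j) * (boxgf j c * boxgf j (n - c)%N + boxgf_se j c * boxgf_se j (n - c)%N).
Proof.
move=> le_cn; rewrite -{1}(subnKC le_cn) big_words_cat big_seq.
rewrite (partition_big_nat north n.+1) => [|u /size_words size_u]; last first.
  by rewrite ltnS (leq_trans _ le_cn) // -size_u -north_add_east leq_addr.
rewrite mulr_sumr; apply: eq_bigr => j _.
rewrite -sum_durfee_pairs !mulr_sumr [RHS]big_seq_cond.
apply: eq_bigr => u /andP[/size_words size_u /eqP north_u].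
have east_uv v : (east (u ++ v) == c) = (east v == j).
  by rewrite -north_u -east_cat_size size_u.
under eq_bigl do rewrite east_uv.
rewrite !mulr_sumr big_seq_cond [RHS]big_seq_cond.
apply: eq_bigr => v /andP[/size_words size_v /eqP east_v].
by rewrite north_cat_size ?north_u // size_v wt_cat north_u east_v.
Qed.

Lemma alt_sum_ovgauss n :
  \sum_(k < n.+1) (-1) ^+ k * ovgauss n k =
  \sum_(w <- words n) (-1) ^+ north w * wt w.
Proof.
rewrite [RHS]big_seq (partition_big_nat east n.+1) => [|w /size_words <-]; last first.
  by rewrite ltnS -north_add_east leq_addl.
rewrite (reindex_inj rev_ord_inj); apply: eq_bigr => c _ /=.
have le_cn : (c <= n)%N by rewrite -ltnS.
rewrite subSS ovgaussE subKn // ovbox_boxgf subnK // /boxgf big_seq_cond mulr_sumr.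
apply: eq_bigr => w /andP[/size_words size_w /eqP <-].
by rewrite -size_w -north_add_east addnK.
Qed.

Lemma alt_sum_words n :
  \sum_(w <- words n) (-1) ^+ north w * wt w =
  \sum_(j < n.+1) 'X^(j * j) * (altconv (boxgf j) n + altconv (boxgf_se j) n).
Proof.
rewrite big_seq (partition_big_nat east n.+1) => [|w /size_words <-]; last first.
  by rewrite ltnS -north_add_east leq_addl.
under eq_bigr => c _ do rewrite -big_seq_cond durfee_split -1?ltnS // mulr_sumr.
rewrite exchange_big; apply: eq_bigr => j _; rewrite /altconv -big_split mulr_sumr.
by apply: eq_bigr => c _ /=; ring.
Qed.

Lemma altconv_boxgfS j n :
  altconv (boxgf j.+1) n = if n is n'.+2 then - altconv (boxgf j) n' else 0.
Proof.
apply: (altconv_delay_rec (a := 'X^(j.+1)) (g := boxgf j)) => [|c].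
  exact: boxgf_gt.
by rewrite boxgfS boxgf_seE.
Qed.

Lemma altconv_boxgf_seS j n :
  altconv (boxgf_se j.+1) n = if n is n'.+2 then - altconv (boxgf j) n' else 0.
Proof.
apply: (altconv_delay_rec (a := 0) (g := boxgf j)) => [|c];
  by rewrite !boxgf_seE ?mul0r ?addr0.
Qed.

Lemma altconv_boxgf j n :
  altconv (boxgf j) n = if ~~ odd n && (j.*2 <= n)%N then (-1) ^+ j else 0.
Proof.
elim: j n => [|j IHj] n; first by rewrite (altconv1 _ boxgf0) andbT; case: (odd n).
rewrite altconv_boxgfS doubleS; case: n => [|[|n]] //=.
by rewrite IHj negbK !ltnS; case: ifP; rewrite ?oppr0 // exprS mulN1r.
Qed.

Lemma altconv_boxgf_sum j n :
  altconv (boxgf j) n + altconv (boxgf_se j) n =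
  if ~~ odd n && (j.*2 <= n)%N then (-1) ^+ j *+ (1 + (0 < j)%N) else 0.
Proof.
case: j => [|j].
  rewrite altconv_boxgf /altconv big1 ?addr0 => [|c _]; last by rewrite boxgf_seE mul0r.
  by case: ifP.
by rewrite altconv_boxgf_seS -altconv_boxgfS altconv_boxgf; case: ifP; rewrite ?addr0.
Qed.

Theorem theorem1p3 (n : nat) :
  \sum_(k < n.+1) (-1) ^+ k * ovgauss n k =
  (if odd n then 0
   else \sum_(i < n.+1)
          (-1) ^+ `|(i : nat)%:Z - (n./2)%:Z|%N
          * 'X^(`|(i : nat)%:Z - (n./2)%:Z| ^ 2)%N).
Proof.
rewrite alt_sum_ovgauss alt_sum_words; under eq_bigr do rewrite altconv_boxgf_sum.
have [_|even_n] := boolP (odd n); first by rewrite big1 // => j _; rewrite mulr0.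
have [m ->] : exists m, n = m.*2.
  by exists n./2; rewrite -[LHS]odd_double_half (negbTE even_n).
rewrite doubleK (sum_distn_center _ (fun j => (-1) ^+ j * 'X^(j ^ 2))) /=.
have le_m_2m : (m.+1 <= (m.*2).+1)%N by rewrite ltnS -addnn leq_addr.
rewrite [RHS](big_ord_widen _ (fun j => (-1) ^+ j * 'X^(j ^ 2) *+ (1 + (0 < j))%N) le_m_2m).
rewrite [RHS]big_mkcond [LHS](eq_bigr (fun j : 'I_(m.*2).+1 =>
  if (j < m.+1)%N then (-1) ^+ j * 'X^(j ^ 2) *+ (1 + (0 < j))%N else 0)) // => j _.
by rewrite leq_double ltnS; case: ifP; rewrite ?mulr0 // mulrnAr mulrC -mulnn.
Qed.
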